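(* Let $G\cong A_n$ with $n\ge 5$. Then either $G\cong A_5$ or $o(G)\ge 3.55$.
   Context: For a finite group $G$, $\psi(G)=\sum_{x\in G}|x|$ where $|x|$ is the order of $x$, and $o(G)=\psi(G)/|G|$. $A_n$ is the alternating group of degree $n$. *)

From mathcomp Require Import all_boot all_algebra all_fingroup all_solvable.
Set Implicit Arguments. Unset Strict Implicit. Unset Printing Implicit Defensive.

Definition psi (gT : finGroupType) (G : {set gT}) : nat :=
  (\sum_(x in G) #[x]%g)%N.

Definition o_avg (gT : finGroupType) (G : {set gT}) : rat :=
  ((psi G)%:R / (#|G|)%:R)%R.

From mathcomp Require Import all_boot all_algebra all_fingroup all_solvable.
From mathcomp Require Import zify.
Set Implicit Arguments. Unset Strict Implicit. Unset Printing Implicit Defensive.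

(* Averaging over A_n, n >= 6.  Fix points x0 <> x1 and weigh an even permutation
   s by min(5, |orbit of x0|) if s moves x0 and by min(4, |orbit of x1|) if s fixes
   x0; orbit lengths divide #[s], so the weight is at most #[s].  As A_n is
   (n-2)-transitive, the proportion of s in A_n that fix p given points and have an
   orbit of more than m points through a further point is (n-p-m)/n^_(p+1), as in
   S_n.  Summing these proportions gives o(A_n) >= 5 - 10/n + 3(n-3)/(n(n-1)),
   which is at least 3.55 for n >= 6. *)

Lemma ffactnD n a b : (n ^_ (a + b) = n ^_ a * (n - a) ^_ b)%N.
Proof.
elim: b => [|b IHb]; first by rewrite addn0 muln1.
by rewrite addnS !ffactnSr IHb subnDA mulnA.
Qed.

Lemma sum_nat_bool_le (K N : nat) (F : nat -> bool) :
  (forall k, F k -> k < N)%N -> (\sum_(k < K) F k <= N)%N.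
Proof.
move=> FN; apply: (@leq_trans (minn K N)); last exact: geq_minr.
elim: K => [|K IHK]; first by rewrite big_ord0.
rewrite big_ord_recr /=; move: (\sum_(i < K) F i) IHK => S IHK.
by case FK: (F K) => /=; [have := FN K FK | ]; lia.
Qed.

Lemma card_set_sum (aT : finType) (A : {set aT}) (Q : pred aT) :
  #|[set a in A | Q a]| = (\sum_(a in A) Q a)%N.
Proof.
rewrite -sum1_card [RHS]big_mkcond [LHS]big_mkcond.
by apply: eq_bigr => a _; rewrite inE; case: (a \in A); case: (Q a).
Qed.

Lemma map_belast (T : eqType) (f : T -> T) x (v : seq T) :
  (map f (belast x v) == v) = (v == traject f (f x) (size v)).
Proof.
by elim: v x => [|y v IHv] x //=; rewrite !eqseq_cons IHv eq_sym; case: eqP => [->|].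
Qed.

Lemma map_eq_fixed (T : eqType) (f : T -> T) (P : seq T) :
  (map f P == P) = all (fun y => f y == y) P.
Proof. by elim: P => [|y P IHP] //=; rewrite eqseq_cons IHP. Qed.

Lemma expected_weight_ge (n A : nat) (c0 c1 : nat -> nat) : (6 <= n)%N ->
  (forall k, k <= 4 -> c0 k * n = A * (n - k))%N ->
  (forall k, k <= 2 -> c1 k * (n * n.-1) = A * (n - k.+2))%N ->
  (355 * A <= 100 * (\sum_(k < 5) c0 k + \sum_(k < 3) c1 k))%N.
Proof.
move=> n_ge6 c0E c1E.
have c0E' k : k <= 4 -> c0 k * (n * n.-1) = A * ((n - k) * n.-1).
  by move=> /c0E; rewrite !mulnA => ->.
have weightE : (\sum_(k < 5) c0 k + \sum_(k < 3) c1 k) * (n * n.-1) =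
    A * (\sum_(k < 5) (n - k) * n.-1 + \sum_(k < 3) (n - k.+2)).
  rewrite mulnDl mulnDr !big_distrl !big_distrr /=.
  by congr (_ + _); apply: eq_bigr => -[k /= k_lt] _; [rewrite c0E' | rewrite c1E].
rewrite -(leq_pmul2r (_ : 0 < n * n.-1)); last by rewrite muln_gt0; lia.
rewrite -[X in _ <= X]mulnA weightE -mulnA mulnCA [X in _ <= X]mulnCA leq_mul2l.
apply/orP; right.
rewrite !big_ord_recr !big_ord0 /=.
have [N ->] : exists N, n = N + 6 by exists (n - 6); lia.
have pred6 : (N + 6).-1 = N + 5 by lia.
have sub6 k : k <= 6 -> N + 6 - k = N + (6 - k) by lia.
rewrite pred6 !sub6 //=.
nia.
Qed.

Section AltPermutations.
Local Open Scope group_scope.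
Variable T : finType.

Lemma card_Alt_ntuple_fibre m (u w : m.-tuple T) : (m <= #|T|.-2)%N ->
  uniq u -> uniq w ->
  (#|[set s in 'Alt_T | n_act 'P u s == w]| * #|T| ^_ m = #|'Alt_T|)%N.
Proof.
move=> hm uu uw.
have tr := ntransitive_weak hm (Alt_trans T).
have du : u \in m.-dtuple(setT) by rewrite inE uu; apply/subsetP.
have dw : w \in m.-dtuple(setT) by rewrite inE uw; apply/subsetP.
have [a Aa ewa] := atransP2 tr du dw.
have -> : [set s in 'Alt_T | n_act 'P u s == w] =
          'C_('Alt_T)[u | ('P * m)%act] :* a.
  apply/setP => s; rewrite mem_rcoset in_setI groupMr ?groupV // inE ewa.
  congr (_ && _); apply/eqP/astab1P => [us | us].
    by rewrite actM [to in to u s]/= us actK.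
  change (n_act 'P u s) with (('P * m)%act u s).
  by rewrite -[in RHS]us -actM mulgKV.
rewrite card_rcoset mulnC -(card_orbit_stab ('P * m)%act ('Alt_T)%G u).
rewrite (atransP tr _ du); congr (_ * _)%N.
rewrite -[#|T|]/#|(predT : pred T)| -card_uniq_tuples.
apply: eq_card => t; rewrite !inE all_predT /=.
by apply/esym/andb_idr => _; apply/subsetP => y; rewrite inE.
Qed.
(* [uniq (traject s x m.+1)] says that the s-orbit of [x] has more than [m] points. *)
Definition fix_long_orbit (P : seq T) (x : T) (m : nat) : pred {perm T} :=
  fun s => all (fun y => s y == y) P && uniq (P ++ traject s x m.+1).

Section LongOrbitCount.

Variables (p m : nat) (P : p.-tuple T) (x : T).
Hypothesis uniq_xP : uniq (x :: P).

Let V := [set v : m.-tuple T | uniq (P ++ x :: v)].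
Let u (v : m.-tuple T) := [tuple of P ++ belast x v].
Let w (v : m.-tuple T) := [tuple of P ++ v].

Lemma card_avoiding_tuples : #|V| = (#|T| - p.+1) ^_ m.
Proof.
have <- : #|[predC x :: P]| = (#|T| - p.+1)%N.
  by rewrite -(cardC (mem (x :: P))) (card_uniqP uniq_xP) /= size_tuple addKn.
rewrite -card_uniq_tuples; apply: eq_card => v; rewrite !inE cat_uniq /=.
move: uniq_xP => /= /andP[/negbTE xNP ->]; rewrite xNP /= andbA; congr (_ && _).
elim: (tval v) => //= y t IHt; rewrite -IHt !inE [y == x]eq_sym.
by move: (has _ t) (x \in t) (x == y) (y \in P) => [] [] [] [].
Qed.

Lemma fix_long_orbit_fibres (s : {perm T}) :
  fix_long_orbit P x m s = (\sum_(v in V) (n_act 'P (u v) s == w v))%N :> nat.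
Proof.
have t0P : size (traject s (s x) m) == m by rewrite size_traject.
pose t0 := Tuple t0P.
have fibreE v : (n_act 'P (u v) s == w v) = all (fun y => s y == y) P && (v == t0).
  rewrite -val_eqE /= map_cat eqseq_cat ?size_map ?size_tuple //.
  by rewrite map_eq_fixed map_belast size_tuple.
under eq_bigr => v _ do rewrite fibreE.
rewrite /fix_long_orbit; case: (all _ P) => /=; last by rewrite big1.
have -> : uniq (P ++ traject s x m.+1) = (t0 \in V) by rewrite inE.
case: (boolP (t0 \in V)) => t0V.
  by rewrite (bigD1 t0) //= eqxx big1 // => v /andP[_ /negbTE ->].
by rewrite big1 // => v vV; case: eqP => // vt0; rewrite -vt0 vV in t0V.
Qed.

Lemma card_Alt_fix_long_orbit : (p + m <= #|T|.-2)%N ->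
  (#|[set s in 'Alt_T | fix_long_orbit P x m s]| * #|T| ^_ p.+1
     = #|'Alt_T| * (#|T| - (p + m)))%N.
Proof.
move=> hpm.
have fibres : (#|[set s in 'Alt_T | fix_long_orbit P x m s]| * #|T| ^_ (p + m)
               = #|V| * #|'Alt_T|)%N.
  rewrite card_set_sum (eq_bigr _ (fun s _ => fix_long_orbit_fibres s)).
  rewrite exchange_big big_distrl -sum_nat_const /=; apply: eq_bigr => v.
  rewrite inE => uPxv; rewrite -card_set_sum card_Alt_ntuple_fibre //.
  - by move: uPxv; rewrite lastI -rcons_cat rcons_uniq => /andP[].
  - exact: subseq_uniq (cat_subseq (subseq_refl P) (subseq_cons v x)) uPxv.
apply/eqP; rewrite -(eqn_pmul2r (_ : 0 < #|T| ^_ (p + m))%N) ?ffact_gt0; last lia.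
apply/eqP; rewrite mulnAC fibres card_avoiding_tuples -[RHS]mulnA.
rewrite [((#|T| - (p + m)) * _)%N]mulnC -ffactnSr -addSn ffactnD.
by rewrite mulnC mulnA mulnC.
Qed.

End LongOrbitCount.

Lemma uniq_traject_lt_order (s : {perm T}) x k :
  uniq (traject s x k.+1) -> (k < #[s])%N.
Proof.
rewrite ltnNge; apply: contraTN => ord_le_k; apply/negP => uniq_t.
have lt0 : (0 < size (traject s x k.+1))%N by rewrite size_traject.
have lt_ord : (#[s] < size (traject s x k.+1))%N by rewrite size_traject ltnS.
have := nth_uniq x lt0 lt_ord uniq_t.
rewrite !nth_traject ?ltnS // -[iter #[s] s x]permX expg_order perm1 eqxx.
by rewrite eq_sym eqn0Ngt order_gt0.
Qed.

Definition orbit_weight (x0 x1 : T) (s : {perm T}) : nat :=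
  (\sum_(k < 5) fix_long_orbit [::] x0 k s
   + \sum_(k < 3) fix_long_orbit [:: x0] x1 k.+1 s)%N.

Lemma orbit_weight_le_order x0 x1 s : (orbit_weight x0 x1 s <= #[s])%N.
Proof.
have orbit0 k : fix_long_orbit [::] x0 k s = uniq (traject s x0 k.+1) :> nat by [].
have orbit1 k : fix_long_orbit [:: x0] x1 k s =
    (s x0 == x0) && uniq (x0 :: traject s x1 k.+1) :> nat.
  by rewrite /fix_long_orbit /= andbT.
rewrite /orbit_weight (eq_bigr _ (fun (k : 'I_5) _ => orbit0 k))
  (eq_bigr _ (fun (k : 'I_3) _ => orbit1 k.+1)).
case: eqP => [sx0 | _]; last first.
  rewrite [X in (_ + X)%N]big1 ?addn0 => [|k _ //].
  apply: (@sum_nat_bool_le _ _ (fun k => uniq (traject s x0 k.+1))) => k.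
  exact: uniq_traject_lt_order.
rewrite big_ord_recl big1 => [|k _]; last by rewrite /= sx0 inE eqxx.
have : (\sum_(k < 3) (true && uniq (x0 :: traject s x1 k.+2)) <= #[s].-1)%N.
  apply: (@sum_nat_bool_le _ _ (fun k => true && uniq (x0 :: traject s x1 k.+2))).
  by move=> k; rewrite andTb cons_uniq => /andP[_ /uniq_traject_lt_order]; lia.
have := order_gt0 s; move: (\sum_(_ < 3) _) => S; rewrite [uniq _]/= addn0; lia.
Qed.

Lemma sum_order_Alt_ge (x0 x1 : T) : (6 <= #|T|)%N -> x0 != x1 ->
  (355 * #|'Alt_T| <= 100 * \sum_(s in 'Alt_T) #[s])%N.
Proof.
move=> T_ge6 x01.
pose c0 k := #|[set s in 'Alt_T | fix_long_orbit [::] x0 k s]|.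
pose c1 k := #|[set s in 'Alt_T | fix_long_orbit [:: x0] x1 k.+1 s]|.
have c0E k : (k <= 4)%N -> (c0 k * #|T| = #|'Alt_T| * (#|T| - k))%N.
  move=> k_le4; have := @card_Alt_fix_long_orbit 0 k [tuple] x0 isT.
  by rewrite ffactn1 add0n; apply; lia.
have c1E k : (k <= 2)%N -> (c1 k * (#|T| * #|T|.-1) = #|'Alt_T| * (#|T| - k.+2))%N.
  move=> k_le2; have := @card_Alt_fix_long_orbit 1 k.+1 [tuple x0] x1.
  by rewrite ffactnS ffactn1 add1n; apply; [rewrite /= inE eq_sym x01 | lia].
apply: leq_trans (expected_weight_ge T_ge6 c0E c1E) _; rewrite leq_mul2l /=.
have -> : (\sum_(k < 5) c0 k + \sum_(k < 3) c1 k
           = \sum_(s in 'Alt_T) orbit_weight x0 x1 s)%N.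
  rewrite /orbit_weight big_split /= [X in (_ = X + _)%N]exchange_big.
  rewrite [X in (_ = _ + X)%N]exchange_big /=.
  by rewrite /c0 /c1; congr (_ + _)%N; apply: eq_bigr => k _; rewrite card_set_sum.
by apply: leq_sum => s _; apply: orbit_weight_le_order.
Qed.

End AltPermutations.

Import GRing.Theory Num.Theory.

Lemma psi_isog (gT rT : finGroupType) (G : {group gT}) (H : {group rT}) :
  (G \isog H)%g -> psi G = psi H.
Proof.
case/isogP => f injf <-; rewrite /psi morphimEdom big_imset /=; last exact/injmP.
by apply: eq_bigr => x Gx; rewrite order_injm.
Qed.

Lemma o_avg_isog (gT rT : finGroupType) (G : {group gT}) (H : {group rT}) :
  (G \isog H)%g -> o_avg G = o_avg H.
Proof. by move=> isoGH; rewrite /o_avg (psi_isog isoGH) (card_isog isoGH). Qed.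

Lemma o_avg_Alt_ge (T : finType) : (6 <= #|T|)%N ->
  ((355%:R / 100%:R : rat) <= o_avg ('Alt_T)%g)%R.
Proof.
move=> T_ge6; have /card_gt1P[x0 [x1 [_ _ x01]]] : (1 < #|T|)%N by lia.
have Alt_gt0 : (0 < (#|('Alt_T)%g|)%:R :> rat)%R by rewrite ltr0n cardG_gt0.
rewrite /o_avg (ler_pdivlMr _ _ Alt_gt0) mulrAC (ler_pdivrMr _ _ (ltr0n _ 100)).
by rewrite -!natrM ler_nat [(psi _ * _)%N]mulnC; exact: sum_order_Alt_ge T_ge6 x01.
Qed.

Theorem lemma4p1 (gT : finGroupType) (G : {group gT}) (n : nat) :
  (5 <= n)%N ->
  (G \isog ('Alt_('I_n))%G)%g ->
  (G \isog ('Alt_('I_5))%G)%g \/ ((355%:R / 100%:R : rat) <= o_avg G)%R.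
Proof.
rewrite leq_eqVlt => /orP[/eqP <- | n_gt5] isoG; first by left.
by right; rewrite (o_avg_isog isoG) o_avg_Alt_ge // card_ord.
Qed.
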